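(* Let $k=\mathbb R$ or $\mathbb C$, let $(V,g)$ be an inner product vector space over $k$, let $f\in\operatorname{End}_k(V)$, and let $\mathcal H_f=\{H_i\}_{i\in I}$ be a family of finite-dimensional $f$-invariant subspaces with $V=\bigoplus_{i\in I}H_i$; write $f_i=f|_{H_i}$ and $\mathcal H_f^\perp=\bigoplus_{i\in I}[\operatorname{Im} f_i]_i^\perp$. Then $\mathcal H_f^\perp=[\operatorname{Im} f]^\perp$ if and only if $[\operatorname{Im} f_i]_i^\perp\subseteq\big[\sum_{j\ne i}\operatorname{Im} f_j\big]^\perp$ for every $i\in I$.
   Context: An inner product is linear in the first argument, conjugate-symmetric and positive definite. $V=\bigoplus_{i\in I}H_i$ means the natural map $\bigoplus H_i\to V$ is an isomorphism. For a subspace $W\subseteq V$, $W^\perp=\{v\in V:g(w,v)=0\ \forall w\in W\}$; for a subspace $W\subseteq H_i$, $[W]_i^\perp=\{v\in H_i:g(w,v)=0\ \forall w\in W\}$. *)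

From HB Require Import structures.
From mathcomp Require Import all_boot all_order all_algebra.
From mathcomp Require Import boolp classical_sets.
Set Implicit Arguments. Unset Strict Implicit. Unset Printing Implicit Defensive.
Import Order.TTheory GRing.Theory Num.Theory.
Local Open Scope ring_scope.
Local Open Scope classical_set_scope.

Section Defs.
Variables (k : numFieldType) (V : lmodType k).

Definition is_inner_product (conj : k -> k) (g : V -> V -> k) : Prop :=
  [/\ (forall (a : k) (u v w : V), g (a *: u + v) w = a * g u w + g v w),
      (forall u v : V, g u v = conj (g v u)) &
      (forall v : V, v != 0 -> 0 < g v v)].

Definition is_subspace (W : set V) : Prop :=
  W 0 /\ forall (a : k) (u v : V), W u -> W v -> W (a *: u + v).

Definition finite_dim_subspace (W : set V) : Prop :=
  is_subspace W /\
  exists (n : nat) (e : 'I_n -> V), (forall m, W (e m)) /\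
    forall v, W v -> exists c : 'I_n -> k, v = \sum_(m < n) c m *: e m.

Definition sumsp (I : Type) (J : set I) (W : I -> set V) : set V :=
  [set v | exists (n : nat) (idx : 'I_n -> I) (x : 'I_n -> V),
      (forall m, J (idx m) /\ W (idx m) (x m)) /\ v = \sum_(m < n) x m].

(* V is the internal direct sum of the H i: the natural map from the
   external direct sum is surjective and injective. *)
Definition is_direct_sum (I : Type) (H : I -> set V) : Prop :=
  (forall v : V, exists (n : nat) (idx : 'I_n -> I) (x : 'I_n -> V),
      (forall m, H (idx m) (x m)) /\ v = \sum_(m < n) x m) /\
  (forall (n : nat) (idx : 'I_n -> I) (x : 'I_n -> V),
      injective idx -> (forall m, H (idx m) (x m)) ->
      \sum_(m < n) x m = 0 -> forall m, x m = 0).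

Definition orth (g : V -> V -> k) (W : set V) : set V :=
  [set v | forall w, W w -> g w v = 0].

Definition orth_in (g : V -> V -> k) (Hi : set V) (W : set V) : set V :=
  Hi `&` orth g W.

Definition Hf_perp (g : V -> V -> k) (f : V -> V) (I : Type) (H : I -> set V) : set V :=
  sumsp setT (fun i => orth_in g (H i) (f @` H i)).

End Defs.

From HB Require Import structures.
From mathcomp Require Import all_boot all_order all_algebra.
From mathcomp Require Import boolp classical_sets.
Import Order.TTheory GRing.Theory Num.Theory.
Local Open Scope ring_scope.
Local Open Scope classical_set_scope.

(* Each H_i is finite-dimensional, so it splits orthogonally as
   Im f_i + [Im f_i]_i^perp, and summing over i gives V = Im f + H_f^perp.
   The condition on the [Im f_i]_i^perp says exactly that H_f^perp is
   orthogonal to Im f = sum_j Im f_j.  Then a vector v orthogonal to Im f,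
   written v = f u + r with r in H_f^perp, has f u = v - r orthogonal to Im f,
   hence f u = 0 and v = r lies in H_f^perp.  Conversely, if H_f^perp equals
   [Im f]^perp, then [Im f_i]_i^perp is contained in [Im f]^perp, which is
   contained in [sum_(j <> i) Im f_j]^perp. *)

Section Subspaces.
Set Implicit Arguments. Unset Strict Implicit.
Variables (k : numFieldType) (V : lmodType k).
Implicit Types (W S : set V) (u v : V).

Lemma subspaceD W u v : is_subspace W -> W u -> W v -> W (u + v).
Proof. by move=> [_ sW] Wu Wv; have := sW 1 u v Wu Wv; rewrite scale1r. Qed.

Lemma subspaceZ W a u : is_subspace W -> W u -> W (a *: u).
Proof. by move=> [W0 sW] Wu; have := sW a u 0 Wu W0; rewrite addr0. Qed.

Lemma subspaceB W u v : is_subspace W -> W u -> W v -> W (u - v).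
Proof. by move=> sW Wu Wv; rewrite -scaleN1r; apply: subspaceD => //; apply: subspaceZ. Qed.

Lemma subspace_sum W n (F : 'I_n -> V) :
  is_subspace W -> (forall m, W (F m)) -> W (\sum_(m < n) F m).
Proof.
by move=> sW WF; apply: (big_ind W) => //; [case: sW | move=> u v; exact: subspaceD].
Qed.

Lemma subspace_range (U : lmodType k) (f : {linear U -> V}) : is_subspace (range f).
Proof.
split; first by exists 0; rewrite ?raddf0.
by move=> a _ _ [x _ <-] [y _ <-]; exists (a *: x + y); rewrite ?linearP.
Qed.

Lemma sub_sumsp (I : Type) (J : set I) (W : I -> set V) j :
  J j -> W j `<=` sumsp J W.
Proof. by move=> Jj v Wv; exists 1%N, (fun=> j), (fun=> v); rewrite big_ord1. Qed.

Lemma sumsp_sub_subspace (I : Type) (J : set I) (W : I -> set V) S :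
  is_subspace S -> (forall j, J j -> W j `<=` S) -> sumsp J W `<=` S.
Proof.
move=> sS WS _ [n [idx [x [Wx ->]]]]; apply: subspace_sum => // m.
by have [Jm Wm] := Wx m; exact: WS Jm _ Wm.
Qed.

End Subspaces.

Section InnerProduct.
Set Implicit Arguments. Unset Strict Implicit.
Variables (k : numFieldType) (conj : {rmorphism k -> k}) (V : lmodType k)
  (g : V -> V -> k).
Hypothesis conjK : involutive conj.
Hypothesis g_ip : is_inner_product conj g.
Implicit Types (W : set V) (u v w : V).

Lemma ipDl u v w : g (u + v) w = g u w + g v w.
Proof. by case: g_ip => lin _ _; have := lin 1 u v w; rewrite scale1r mul1r. Qed.

Lemma ip0l w : g 0 w = 0.
Proof. by apply: (addrI (g 0 w)); rewrite -ipDl !addr0. Qed.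

Lemma ipZl a u w : g (a *: u) w = a * g u w.
Proof. by case: g_ip => lin _ _; have := lin a u 0 w; rewrite addr0 ip0l addr0. Qed.

Lemma ipDr w u v : g w (u + v) = g w u + g w v.
Proof. by case: g_ip => _ sym _; rewrite sym ipDl rmorphD -!sym. Qed.

Lemma ip0r w : g w 0 = 0.
Proof. by case: g_ip => _ sym _; rewrite sym ip0l rmorph0. Qed.

Lemma ipZr w a u : g w (a *: u) = conj a * g w u.
Proof. by case: g_ip => _ sym _; rewrite sym ipZl rmorphM -sym. Qed.

Lemma ipBr w u v : g w (u - v) = g w u - g w v.
Proof. by rewrite ipDr -scaleN1r ipZr rmorphN1 mulN1r. Qed.

Lemma ip_suml n (F : 'I_n -> V) w : g (\sum_(m < n) F m) w = \sum_(m < n) g (F m) w.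
Proof. exact: (big_morph (g^~ w) (fun u v => ipDl u v w) (ip0l w)). Qed.

Lemma ip_eq0 v : g v v = 0 -> v = 0.
Proof. by case: g_ip => _ _ pos vv0; apply/eqP/negPn/negP => /pos; rewrite vv0 ltxx. Qed.

Lemma ip_span_l n (e : 'I_n -> V) (c : 'I_n -> k) r :
  (forall l, g (e l) r = 0) -> g (\sum_(m < n) c m *: e m) r = 0.
Proof. by move=> er0; rewrite ip_suml big1 // => m _; rewrite ipZl er0 mulr0. Qed.

Lemma orth_proj_line y r : exists a, g y (r - a *: y) = 0.
Proof.
have [/ip_eq0 ->|yy0] := eqVneq (g y y) 0; first by exists 0; rewrite ip0l.
by exists (conj (g y r / g y y)); rewrite ipBr ipZr conjK divfK // subrr.
Qed.

(* Gram-Schmidt: correct the projection onto the last n vectors along the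
   component of [e ord0] orthogonal to them. *)
Lemma orth_proj n (e : 'I_n -> V) v :
  exists c : 'I_n -> k, forall l, g (e l) (v - \sum_(m < n) c m *: e m) = 0.
Proof.
elim: n e v => [|n IHn] e v; first by exists (fun=> 0) => -[].
pose e' j := e (lift ord0 j).
have [c1 orth1] := IHn e' v; have [c2 orth2] := IHn e' (e ord0).
set y := e ord0 - \sum_(m < n) c2 m *: e' m.
have [a orth_y] := orth_proj_line y (v - \sum_(m < n) c1 m *: e' m).
exists (fun m => if unlift ord0 m is Some j then c1 j - a * c2 j else a).
have -> : \sum_(m < n.+1)
    (if unlift ord0 m is Some j then c1 j - a * c2 j else a) *: e m
    = \sum_(m < n) c1 m *: e' m + a *: y.
  rewrite big_ord_recl unlift_none addrC.
  under eq_bigr => j _ do rewrite liftK scalerBl -scalerA.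
  by rewrite sumrB -scaler_sumr /y scalerBr -addrA [- _ + _]addrC.
rewrite opprD addrA.
have orth' j : g (e' j) (v - \sum_(m < n) c1 m *: e' m - a *: y) = 0.
  by rewrite ipBr ipZr orth1 /y orth2 mulr0 subrr.
move=> l; case: (unliftP ord0 l) => [j ->|->]; first exact: orth'.
by rewrite -(subrK (\sum_(m < n) c2 m *: e' m) (e ord0)) ipDl -/y orth_y add0r ip_span_l.
Qed.

Lemma orth_subspace W : is_subspace (orth g W).
Proof.
split=> [w _|a u v Wu Wv w Ww]; first exact: ip0r.
by rewrite ipDr ipZr Wu // Wv // mulr0 addr0.
Qed.

Lemma orth_sumsp (I : Type) (J : set I) (W : I -> set V) :
  orth g (sumsp J W) = \bigcap_(j in J) orth g (W j).
Proof.
apply/seteqP; split=> [v Wv j Jj w Wjw|v Wv w [n [idx [x [Wx ->]]]]].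
  by apply: Wv; exact: sub_sumsp Jj _ Wjw.
by rewrite ip_suml big1 // => m _; have [Jm Wm] := Wx m; exact: Wv Jm _ Wm.
Qed.

Lemma orth_self_eq0 W v : W v -> orth g W v -> v = 0.
Proof. by move=> Wv /(_ v Wv) /ip_eq0. Qed.

Lemma orth_in_decomposition (H : set V) (f : {linear V -> V}) x :
  finite_dim_subspace H -> (forall v, H v -> H (f v)) -> H x ->
  exists2 y, H y & orth_in g H (f @` H) (x - f y).
Proof.
move=> [sH [n [e [He spanH]]]] fH Hx.
have [c orth_c] := orth_proj (f \o e) x.
have fspan d : f (\sum_(m < n) d m *: e m) = \sum_(m < n) d m *: f (e m).
  by rewrite linear_sum; apply: eq_bigr => m _; rewrite linearZ.
have Hy : H (\sum_(m < n) c m *: e m).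
  by apply: subspace_sum => // m; apply: subspaceZ.
exists (\sum_(m < n) c m *: e m) => //; split; first exact: subspaceB (fH _ Hy).
move=> _ [z Hz <-]; have [d ->] := spanH z Hz.
by rewrite !fspan; apply: ip_span_l.
Qed.

End InnerProduct.

Section DirectSum.
Set Implicit Arguments. Unset Strict Implicit.
Variables (k : numFieldType) (conj : {rmorphism k -> k}) (V : lmodType k)
  (g : V -> V -> k) (f : {linear V -> V}) (I : Type) (H : I -> set V).
Hypothesis g_ip : is_inner_product conj g.
Hypothesis H_span : forall v, sumsp setT H v.

Lemma orth_in_sub_Hf_perp i : orth_in g (H i) (f @` H i) `<=` Hf_perp g f H.
Proof. exact: (sub_sumsp (j := i)). Qed.

Lemma range_sumsp : range f = sumsp setT (fun i => f @` H i).
Proof.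
apply/seteqP; split=> [_ [u _ <-]|_ [n [idx [x [fHx ->]]]]].
  have [n [idx [x [Hx ->]]]] := H_span u.
  exists n, idx, (f \o x); rewrite linear_sum; split=> // m.
  by have [_ Hm] := Hx m; split=> //; exists (x m).
apply: subspace_sum; first exact: subspace_range.
by move=> m; have [_ [y _ <-]] := fHx m; exists y.
Qed.

Lemma Hf_perp_sub_orth_range :
  (forall i, orth_in g (H i) (f @` H i)
             `<=` orth g (sumsp [set j | j <> i] (fun j => f @` H j))) ->
  Hf_perp g f H `<=` orth g (range f).
Proof.
move=> orth_others; apply: sumsp_sub_subspace; first exact: (orth_subspace g_ip).
move=> i _ x Hx; rewrite range_sumsp (orth_sumsp g_ip) => j _.
have [->|ji] := pselect (j = i); first by case: Hx.
by move: (orth_others i x Hx); rewrite (orth_sumsp g_ip); apply.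
Qed.

Hypothesis conjK : involutive conj.
Hypothesis H_fd : forall i, finite_dim_subspace (H i).
Hypothesis H_inv : forall i v, H i v -> H i (f v).

Lemma range_add_Hf_perp v : exists u r, Hf_perp g f H r /\ v = f u + r.
Proof.
have [n [idx [x [Hx ->]]]] := H_span v.
have /choice [y Hy] m : exists y, orth_in g (H (idx m)) (f @` H (idx m)) (x m - f y).
  have [_ Hm] := Hx m.
  by have [y _ ?] := orth_in_decomposition conjK g_ip (H_fd _) (@H_inv _) Hm; exists y.
exists (\sum_(m < n) y m), (\sum_(m < n) (x m - f (y m))); split.
  by exists n, idx, (fun m => x m - f (y m)); split=> // m; split.
by rewrite linear_sum sumrB addrCA subrr addr0.
Qed.

Lemma orth_range_sub_Hf_perp :
  Hf_perp g f H `<=` orth g (range f) -> orth g (range f) `<=` Hf_perp g f H.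
Proof.
move=> Hf_orth v; have [u [r [Hf_r ->]]] := range_add_Hf_perp v => v_orth.
suff -> : f u = 0 by rewrite add0r.
apply: (orth_self_eq0 g_ip (W := range f)); first by exists u.
have -> : f u = (f u + r) - r by rewrite addrK.
by apply: subspaceB (orth_subspace g_ip _) v_orth (Hf_orth _ Hf_r).
Qed.

End DirectSum.

Theorem lemma3p18 (k : numFieldType) (conj : {rmorphism k -> k})
  (V : lmodType k) (g : V -> V -> k) (f : {linear V -> V})
  (I : Type) (H : I -> set V) :
  involutive conj ->
  is_inner_product conj g ->
  (forall i, finite_dim_subspace (H i)) ->
  (forall i v, H i v -> H i (f v)) ->
  is_direct_sum H ->
  (Hf_perp g f H = orth g (range f) <->
   forall i, orth_in g (H i) (f @` H i)
             `<=` orth g (sumsp [set j | j <> i] (fun j => f @` H j))).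
Proof.
move=> conjK g_ip H_fd H_inv [H_span _].
have {}H_span v : sumsp setT H v.
  by have [n [idx [x [Hx ->]]]] := H_span v; exists n, idx, x.
split=> [Hf_perpE i x Hx|orth_others].
  have : orth g (range f) x by rewrite -Hf_perpE; exact: orth_in_sub_Hf_perp Hx.
  by move=> x_orth; rewrite (orth_sumsp g_ip) => j _ _ [y _ <-]; apply: x_orth; exists y.
have Hf_orth := Hf_perp_sub_orth_range g_ip H_span orth_others.
by apply/seteqP; split=> //; apply: (orth_range_sub_Hf_perp g_ip).
Qed.
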